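(* Let $X$ be a locally compact space, $Y$ a space, and $F\colon\mathcal{K}(X)\to\mathcal{K}(Y)$ a map satisfying: (1) if $K,L\in\mathcal{K}(X)$ and $K\subset L$, then $F(K)\subset F(L)$; $(3')$ for each open cover $\mathcal{W}$ of $X$ and each $y\in Y$ there exist a finite subfamily $\mathcal{E}\subset\mathcal{W}$ and a neighborhood $V_y$ of $y$ such that every compact $L\subset V_y$ satisfies $L\subset F(K)$ for some compact $K\subset\bigcup\mathcal{E}$. Then $Y$ is locally compact.
   Context: All spaces are completely regular. $\mathcal{K}(X)$ denotes the set of all compact subsets of $X$. *)

From HB Require Import structures.
From mathcomp Require Import all_boot all_order all_algebra.
From mathcomp Require Import all_classical all_reals all_analysis.
Set Implicit Arguments. Unset Strict Implicit. Unset Printing Implicit Defensive.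

From HB Require Import structures.
From mathcomp Require Import all_boot all_order all_algebra.
From mathcomp Require Import all_classical all_reals all_analysis.
From mathcomp Require Import Rstruct Rstruct_topology.
Local Open Scope classical_set_scope.

(* Apply (3') to the cover of X by the open sets with compact closure: the
   resulting finite subfamily E has a compact union of closures C, and testing
   (3') on singletons shows that the neighbourhood V_y lies inside the compact
   set F(C).  Since Y is regular, a closed neighbourhood of y inside V_y is then
   compact. *)

Lemma locally_compact_precompact_open_cover {X : topologicalType} :
  locally_compact [set: X] ->
  \bigcup_(U in [set U : set X | open U /\ precompact U]) U = setT.
Proof.
move=> lcX; apply/seteqP; split => // x _.
have [C] := lcX x I; rewrite withinET => nC [cC clC].
exists C°; last exact: nC.
split; first exact: open_interior.
by apply: (precompact_subset (@interior_subset _ C)); rewrite precompact_closed.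
Qed.

Lemma finite_bigcup_closure_compact {X : topologicalType} (E : set (set X)) :
  finite_set E -> (forall U, E U -> precompact U) ->
  compact (\bigcup_(U in E) closure U).
Proof.
move=> /finite_fsetP[B ->] pcE; rewrite bigcup_fset big_seq.
by apply: bigsetU_compact => U UB; rewrite -precompactE; exact: pcE.
Qed.

Lemma regular_locally_compact {Y : topologicalType} :
  regular_space Y -> (forall y : Y, exists2 K, compact K & nbhs y K) ->
  locally_compact [set: Y].
Proof.
move=> regY cpt_nbhs y _.
have [K cK nK] := cpt_nbhs y.
have [U nU clUK] := regY y K nK.
exists (closure U).
  by rewrite withinET; apply: filterS nU; exact: subset_closure.
split; last exact: closed_closure.
by apply: (subclosed_compact _ cK clUK); exact: closed_closure.
Qed.

Theorem proposition4p2 (X Y : topologicalType) (F : set X -> set Y) :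
  completely_regular_space X -> completely_regular_space Y ->
  locally_compact [set: X] ->
  (forall K : set X, compact K -> compact (F K)) ->
  (* (1) monotonicity *)
  (forall K L : set X, compact K -> compact L -> K `<=` L -> F K `<=` F L) ->
  (* (3') *)
  (forall W : set (set X), (forall U, W U -> open U) -> \bigcup_(U in W) U = setT ->
     forall y : Y, exists E : set (set X), [/\ E `<=` W, finite_set E &
       exists V : set Y, nbhs y V /\
         forall L : set Y, compact L -> L `<=` V ->
           exists K : set X, [/\ compact K, K `<=` \bigcup_(U in E) U & L `<=` F K]]) ->
  locally_compact [set: Y].
Proof.
move=> _ crY lcX Fc Fmon H3.
have regY := @completely_regular_regular Rdefinitions.R Y crY.
apply: (regular_locally_compact regY) => y.
pose W := [set U : set X | open U /\ precompact U].
have [E [EW finE [V [nV HV]]]] :=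
  H3 W (fun U (WU : W U) => WU.1) (locally_compact_precompact_open_cover lcX) y.
pose C := \bigcup_(U in E) closure U.
have cC : compact C.
  by apply: finite_bigcup_closure_compact => // U /EW[].
exists (F C); first exact: Fc.
apply: filterS nV => z Vz.
have zV : [set z] `<=` V by move=> _ ->.
have [K [cK KE zK]] := HV [set z] (@compact_set1 Y z) zV.
apply: (Fmon K C cK cC); last exact: (zK z erefl).
by move=> x /KE[U EU Ux]; exists U => //; exact: subset_closure.
Qed.
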